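(* Let $m_1,m_2$ be positive real numbers with $m_1\leq 1.8m_2$. Then the complete graph $K_t$ belongs to $\mathcal{G}_{m_1,m_2}$ for every integer $1\leq t\leq \lfloor 2m_1\rfloor$.
   Context: All graphs are finite and simple. For a graph $H$, $|H|$ denotes its number of vertices and $\lVert H\rVert$ its number of edges. For real numbers $m_1,m_2$, $\mathcal{G}_{m_1,m_2}$ is the class of graphs $G$ such that $\lVert H\rVert\leq m_1|H|$ for every subgraph $H$ of $G$, and $\lVert H\rVert\leq m_2|H|$ for every bipartite subgraph $H$ of $G$. *)

From HB Require Import structures.
From mathcomp Require Import all_boot all_order all_algebra.
Set Implicit Arguments. Unset Strict Implicit. Unset Printing Implicit Defensive.
Import Order.TTheory GRing.Theory Num.Theory.
Local Open Scope ring_scope.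

Definition simple_graph (T : finType) (e : rel T) : Prop :=
  symmetric e /\ irreflexive e.

Definition edges (T : finType) (e : rel T) : {set {set T}} :=
  [set [set x; y] | x in T, y in T & e x y].

(* H = (V, E) is a subgraph of G = (T, e): E is a set of edges of G whose
   endpoints all lie in V.  |H| = #|V|, ||H|| = #|E|. *)
Definition is_subgraph (T : finType) (e : rel T)
    (V : {set T}) (E : {set {set T}}) : Prop :=
  E \subset edges e /\ (forall f, f \in E -> f \subset V).

Definition is_bipartite (T : finType) (V : {set T}) (E : {set {set T}}) : Prop :=
  exists A : {set T}, A \subset V /\ (forall f, f \in E -> #|f :&: A| = 1%N).

Definition in_class (R : realFieldType) (m1 m2 : R)
    (T : finType) (e : rel T) : Prop :=
  forall (V : {set T}) (E : {set {set T}}), is_subgraph e V E ->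
    (#|E|%:R <= m1 * #|V|%:R) /\
    (is_bipartite V E -> #|E|%:R <= m2 * #|V|%:R).

Definition complete_rel (t : nat) : rel 'I_t := fun x y => x != y.

(* A subgraph on n vertices has at most n(n-1)/2 <= n^2/2 edges, and a
   bipartite one with sides of sizes a and b at most a b <= n^2/4 edges.
   Hence any graph with at most 2 m1 vertices satisfies
   ||H|| <= n^2/2 <= m1 n and, in the bipartite case,
   ||H|| <= n^2/4 <= m1 n / 2 <= m2 n as soon as m1 <= 2 m2. *)

From mathcomp Require Import all_boot all_order all_algebra.
From mathcomp Require Import lra.
Import Order.TTheory GRing.Theory Num.Theory.
Local Open Scope ring_scope.

Section SubgraphEdgeBounds.

Context {T : finType} {e : rel T}.
Hypothesis e_irr : irreflexive e.

Lemma card_edge {f : {set T}} : f \in edges e -> #|f| = 2%N.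
Proof.
case/imset2P=> x y _; rewrite inE => exy ->.
by rewrite cards2; case: eqP exy => [->|]; rewrite ?e_irr.
Qed.

Lemma subgraph_edges_le_bin2 {V : {set T}} {E : {set {set T}}} :
  is_subgraph e V E -> (#|E| <= 'C(#|V|, 2))%N.
Proof.
move=> [sEe sEV]; rewrite -cards_draws; apply/subset_leq_card/subsetP => f fE.
by rewrite inE sEV // card_edge ?(subsetP sEe).
Qed.

Lemma bipartite_subgraph_edges_le {V : {set T}} {E : {set {set T}}} {A : {set T}} :
  is_subgraph e V E -> (forall f, f \in E -> #|f :&: A| = 1%N) ->
  (#|E| <= #|V :&: A| * #|V :\: A|)%N.
Proof.
move=> [sEe sEV] cutA; rewrite -cardsX.
apply: leq_trans (leq_imset_card (fun p => [set p.1; p.2]) _).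
apply/subset_leq_card/subsetP => f fE.
have fA1 := cutA f fE.
have fDA1 : #|f :\: A| = 1%N.
  by have := cardsID A f; rewrite fA1 (card_edge (subsetP sEe f fE)) add1n => -[].
have [a fA] := cards1P (introT eqP fA1); have [b fDA] := cards1P (introT eqP fDA1).
have aA : a \in f :&: A by rewrite fA set11.
have bDA : b \in f :\: A by rewrite fDA set11.
move: aA bDA; rewrite !inE => /andP[af aA] /andP[bA bf].
have fV := subsetP (sEV f fE).
apply/imsetP; exists (a, b); first by rewrite !inE /= aA bA !fV.
by rewrite /= -fA -fDA setID.
Qed.

Lemma subgraph_edges_double_le_sqr {V : {set T}} {E : {set {set T}}} :
  is_subgraph e V E -> (#|E|.*2 <= #|V| ^ 2)%N.
Proof.
move=> subVE; apply: leq_trans (leq_mul (leqnn _) (leq_pred _)).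
by rewrite -geq_half_double -bin2 (subgraph_edges_le_bin2 subVE).
Qed.

Lemma bipartite_subgraph_edges_quadruple_le_sqr
    {V : {set T}} {E : {set {set T}}} {A : {set T}} :
  is_subgraph e V E -> (forall f, f \in E -> #|f :&: A| = 1%N) ->
  (4 * #|E| <= #|V| ^ 2)%N.
Proof.
move=> subVE cutA; have [AGM _] := nat_AGM2 #|V :&: A| #|V :\: A|.
rewrite cardsID in AGM; apply: leq_trans AGM.
by rewrite leq_pmul2l // (bipartite_subgraph_edges_le subVE cutA).
Qed.

End SubgraphEdgeBounds.

Lemma in_class_of_small_card (R : realFieldType) (m1 m2 : R)
    (T : finType) (e : rel T) :
  irreflexive e -> #|T|%:R <= 2 * m1 -> m1 <= 2 * m2 -> in_class m1 m2 e.
Proof.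
move=> e_irr small m12 V E subVE.
have nV : (#|V|%:R : R) <= 2 * m1.
  by apply: le_trans small; rewrite ler_nat max_card.
have n_ge0 : (0 : R) <= #|V|%:R by [].
have := subgraph_edges_double_le_sqr e_irr subVE.
rewrite -muln2 -(ler_nat R) natrM natrX => edgesE.
split; first nra.
move=> [A [_ cutA]].
have := bipartite_subgraph_edges_quadruple_le_sqr e_irr subVE cutA.
rewrite -(ler_nat R) natrM natrX => bipE.
nra.
Qed.

Theorem lemma2 (R : archiRealFieldType) (m1 m2 : R) :
  0 < m1 -> 0 < m2 -> m1 <= (9%:R / 5%:R) * m2 ->
  forall t : nat, (1 <= t)%N -> (t%:Z <= Num.floor (2%:R * m1))%R ->
  in_class m1 m2 (@complete_rel t).
Proof.
move=> _ m2_gt0 m12 t _ t_le_floor.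
apply: in_class_of_small_card.
- by move=> x; rewrite /complete_rel eqxx.
- by rewrite card_ord; move: t_le_floor; rewrite floor_ge_int.
- lra.
Qed.
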